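(* Let $R$ be a finitely generated integral $\mathbb{K}$-algebra with an effective, pointed grading by a finitely generated abelian group $K$, let $(\pi,\mathrm{id}_K)\colon S=\mathbb{K}[T_1,\dots,T_r]\to R$ be a minimal presentation and $I:=\ker(\pi)$. Then every graded automorphism $(\varphi,\psi)\in\operatorname{Aut}_K(R)$ satisfies $\psi(\Omega_I)=\Omega_I$.
   Context: $\mathbb{K}$ is algebraically closed of characteristic zero. $\operatorname{Aut}_K(R)$ is the group of graded automorphisms $(\varphi,\psi)$ of $R$ ($\varphi$ algebra automorphism, $\psi\in\operatorname{Aut}(K)$, $\varphi(R_w)=R_{\psi(w)}$). Effective: the weight monoid $\omega(R)=\{w;\ R_w\ne0\}$ generates $K$; pointed: $R_0=\mathbb{K}$ and the cone in $K\otimes\mathbb{Q}$ generated by $\omega(R)$ contains no line. Minimal presentation: $K$-graded polynomial ring $S$ with homogeneous variables and graded epimorphism $(\pi,\kappa)\colon S\to R$ with $\kappa$ a group isomorphism and $\ker\pi\subseteq\langle T_1,\dots,T_r\rangle^2$. On $K$ one has the partial order $w'\le w$ iff $w-w'\in\omega(S)$ (weight monoid of $S$). For the homogeneous ideal $I$, let $I_{<w}\subseteq S$ be the ideal generated by all components $I_{w'}=I\cap S_{w'}$ with $w'<w$; the set of ideal generator degrees is $\Omega_I:=\{w\in K;\ I_w\not\subseteq I_{<w}\}$. *)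

From HB Require Import structures.
From mathcomp Require Import all_boot all_order all_algebra.
From mathcomp Require Import mpoly.
Set Implicit Arguments. Unset Strict Implicit. Unset Printing Implicit Defensive.
Import GRing.Theory.
Local Open Scope ring_scope.

Definition in_monoid_gen (K : zmodType) (A : K -> Prop) (u : K) : Prop :=
  exists s : seq K, (forall x, x \in s -> A x) /\ u = \sum_(x <- s) x.

Definition in_group_gen (K : zmodType) (A : K -> Prop) (u : K) : Prop :=
  exists s t : seq K, (forall x, x \in s -> A x) /\ (forall x, x \in t -> A x)
    /\ u = \sum_(x <- s) x - \sum_(x <- t) x.

Definition fingen_group (K : zmodType) : Prop :=
  exists s : seq K, forall u, in_group_gen (fun x => x \in s) u.

(* u is a torsion element, i.e. u (x) 1 = 0 in K (x) Q *)
Definition torsion (K : zmodType) (u : K) : Prop :=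
  exists n : nat, (0 < n)%N /\ u *+ n = 0.

(** * K-graded algebras; the grading is given by the homogeneous components
    G w = R_w (as predicates on R). *)
Definition is_grading (F : fieldType) (K : zmodType) (R : comAlgType F)
    (G : K -> R -> Prop) : Prop :=
  (forall w, G w 0) /\
      (forall w x y, G w x -> G w y -> G w (x + y)) /\
      (forall w (c : F) x, G w x -> G w (c *: x)) /\
      (forall w w' x y, G w x -> G w' y -> G (w + w') (x * y)) /\
      (forall x : R, exists s : seq (K * R), uniq (map fst s) /\
          (forall p, p \in s -> G p.1 p.2) /\ x = \sum_(p <- s) p.2) /\
      (forall s : seq (K * R), uniq (map fst s) ->
          (forall p, p \in s -> G p.1 p.2) -> \sum_(p <- s) p.2 = 0 ->
          forall p, p \in s -> p.2 = 0).

Definition weight (F : fieldType) (K : zmodType) (R : comAlgType F)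
    (G : K -> R -> Prop) (w : K) : Prop :=
  exists x : R, G w x /\ x != 0.

Definition effective_grading (F : fieldType) (K : zmodType) (R : comAlgType F)
    (G : K -> R -> Prop) : Prop :=
  forall k : K, in_group_gen (weight G) k.

(* pointed: R_0 = K, and the cone generated by omega(R) in K (x) Q contains
   no line.  A line in the cone is a nonzero v with v, -v in the cone; after
   clearing denominators this means: images of u, u' in the monoid generated
   by omega(R) with u + u' = 0 in K (x) Q but u <> 0 in K (x) Q. *)
Definition pointed_grading (F : fieldType) (K : zmodType) (R : comAlgType F)
    (G : K -> R -> Prop) : Prop :=
  (forall x : R, G 0 x -> exists c : F, x = c%:A) /\
  (forall u u' : K, in_monoid_gen (weight G) u -> in_monoid_gen (weight G) u' ->
     torsion (u + u') -> torsion u).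

Definition mdegK (K : zmodType) (r : nat) (q : 'I_r -> K) (m : 'X_{1..r}) : K :=
  \sum_(i < r) q i *+ m i.

Definition homogS (F : fieldType) (K : zmodType) (r : nat) (q : 'I_r -> K)
    (w : K) (p : {mpoly F[r]}) : Prop :=
  forall m, m \in msupp p -> mdegK q m = w.

Definition weightS (F : fieldType) (K : zmodType) (r : nat) (q : 'I_r -> K)
    (w : K) : Prop :=
  exists p : {mpoly F[r]}, homogS q w p /\ p != 0.

Definition leS (F : fieldType) (K : zmodType) (r : nat) (q : 'I_r -> K)
    (w' w : K) : Prop := weightS F q (w - w').
Definition ltS (F : fieldType) (K : zmodType) (r : nat) (q : 'I_r -> K)
    (w' w : K) : Prop := leS F q w' w /\ w' <> w.

Definition Icomp (F : fieldType) (K : zmodType) (r : nat) (q : 'I_r -> K)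
    (I : {mpoly F[r]} -> Prop) (w : K) (p : {mpoly F[r]}) : Prop :=
  I p /\ homogS q w p.

Definition Ilt (F : fieldType) (K : zmodType) (r : nat) (q : 'I_r -> K)
    (I : {mpoly F[r]} -> Prop) (w : K) (p : {mpoly F[r]}) : Prop :=
  exists (n : nat) (f g : 'I_n -> {mpoly F[r]}) (v : 'I_n -> K),
    (forall i, ltS F q (v i) w /\ Icomp q I (v i) (g i)) /\
    p = \sum_(i < n) f i * g i.

Definition OmegaI (F : fieldType) (K : zmodType) (r : nat) (q : 'I_r -> K)
    (I : {mpoly F[r]} -> Prop) (w : K) : Prop :=
  exists p : {mpoly F[r]}, Icomp q I w p /\ ~ Ilt q I w p.

Definition in_irrel_sq (F : fieldType) (r : nat) (p : {mpoly F[r]}) : Prop :=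
  exists g : 'I_r -> 'I_r -> {mpoly F[r]},
    p = \sum_(i < r) \sum_(j < r) 'X_i * 'X_j * g i j.

From HB Require Import structures.
From mathcomp Require Import all_boot all_order all_algebra.
From mathcomp Require Import mpoly.
From Stdlib Require Import IndefiniteDescription.
Import GRing.Theory.
Local Open Scope ring_scope.
Set Implicit Arguments. Unset Strict Implicit.

(* The automorphism (phi, psi) and its inverse lift to endomorphisms Phi,
   Phi' of S that are graded with degree maps psi and psi^-1 and compatible
   with pi; hence they preserve I and map I_{<w} into I_{<psi w}, resp.
   I_{<psi^-1 w}.  The composite Theta = Phi' o Phi preserves degrees and
   satisfies pi o Theta = pi, so Theta T_i - T_i lies in I_{deg T_i}.
   Minimality of the presentation and R_0 = scalars force deg T_i < w for
   every variable T_i occurring in an element of I_w, so Theta p - p lies in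
   I_{<w} for p in I_w.  If Phi p were in I_{<psi w}, then
   p = Theta p - (Theta p - p) would lie in I_{<w}. *)

Section GradedPolynomials.
Variables (F : fieldType) (K : zmodType) (r : nat) (q : 'I_r -> K).
Local Notation S := {mpoly F[r]}.

Lemma mdegK0 : mdegK q 0%MM = 0.
Proof. by rewrite /mdegK big1 // => i _; rewrite mnm0E mulr0n. Qed.

Lemma mdegKD m1 m2 : mdegK q (m1 + m2)%MM = mdegK q m1 + mdegK q m2.
Proof.
by rewrite /mdegK -big_split /=; apply: eq_bigr => i _; rewrite mnmDE mulrnDr.
Qed.

Lemma mdegK1 i : mdegK q U_(i)%MM = q i.
Proof.
rewrite /mdegK (bigD1 i) //= mnm1E eqxx mulr1n big1 ?addr0 // => j /negPf.
by rewrite mnm1E eq_sym => ->; rewrite mulr0n.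
Qed.

Lemma homogSP w (p : S) :
  homogS q w p <-> (forall m, p@_m != 0 -> mdegK q m = w).
Proof.
by split=> h m; [rewrite -mcoeff_msupp; apply: h | rewrite mcoeff_msupp; apply: h].
Qed.

Lemma homogS0 w : homogS q w (0 : S).
Proof. by apply/homogSP => m; rewrite mcoeff0 eqxx. Qed.

Lemma homogSD w (p1 p2 : S) :
  homogS q w p1 -> homogS q w p2 -> homogS q w (p1 + p2).
Proof.
move=> /homogSP h1 /homogSP h2; apply/homogSP => m; rewrite mcoeffD.
by case: (eqVneq p1@_m 0) => [->|/h1 //]; rewrite add0r => /h2.
Qed.

Lemma homogSZ w c (p : S) : homogS q w p -> homogS q w (c *: p).
Proof.
move=> /homogSP h; apply/homogSP => m; rewrite mcoeffZ.
by case: (eqVneq p@_m 0) => [->|/h //]; rewrite mulr0 eqxx.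
Qed.

Lemma homogSB w (p1 p2 : S) :
  homogS q w p1 -> homogS q w p2 -> homogS q w (p1 - p2).
Proof. by move=> h1 h2; apply: homogSD => //; rewrite -scaleN1r; apply: homogSZ. Qed.

Lemma homogSM w1 w2 (p1 p2 : S) : homogS q w1 p1 -> homogS q w2 p2 ->
  homogS q (w1 + w2) (p1 * p2).
Proof.
move=> h1 h2 m /msuppM_le /allpairsP [[m1 m2] /= [i1 i2 ->]].
by rewrite mdegKD (h1 _ i1) (h2 _ i2).
Qed.

Lemma homogSX m : homogS q (mdegK q m) ('X_[m] : S).
Proof. by move=> m'; rewrite msuppX mem_seq1 => /eqP ->. Qed.

Lemma homogS_var i : homogS q (q i) ('X_i : S).
Proof. by rewrite -[q i](mdegK1 i); apply: homogSX. Qed.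

Lemma homogS1 : homogS q 0 (1 : S).
Proof. by rewrite -mpolyX0 -mdegK0; apply: homogSX. Qed.

Lemma homogSXn w (p : S) k : homogS q w p -> homogS q (w *+ k) (p ^+ k).
Proof.
move=> h; elim: k => [|k ih]; first by rewrite expr0 mulr0n; apply: homogS1.
by rewrite exprS mulrS; apply: homogSM.
Qed.

Lemma homogS_sum w (I : Type) (s : seq I) (P : pred I) (f : I -> S) :
  (forall i, P i -> homogS q w (f i)) -> homogS q w (\sum_(i <- s | P i) f i).
Proof. by move=> h; apply: big_ind => //; [apply: homogS0 | apply: homogSD]. Qed.

Lemma weightS_X m : weightS F q (mdegK q m).
Proof.
by exists 'X_[m]; split; [apply: homogSX | rewrite -msupp_eq0 msuppX].
Qed.

Definition homog_part (v : K) (p : S) : S :=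
  \sum_(m <- msupp p | mdegK q m == v) p@_m *: 'X_[m].

Lemma homogS_part v p : homogS q v (homog_part v p).
Proof. by apply: homogS_sum => m /eqP <-; apply: homogSZ; apply: homogSX. Qed.

Lemma sum_homog_part (D : seq K) (p : S) : uniq D ->
  {subset map (mdegK q) (msupp p) <= D} -> \sum_(v <- D) homog_part v p = p.
Proof.
move=> uD sD; rewrite /homog_part (exchange_big_dep predT) //= [RHS]mpolyE.
apply: eq_big_seq => m hm.
rewrite -big_filter (@eq_in_filter _ _ (pred1 (mdegK q m))); last first.
  by move=> v _; rewrite /= eq_sym.
by rewrite filter_pred1_uniq ?big_seq1 // sD ?map_f.
Qed.

Lemma irrel_sq_mcoeff (p : S) m : in_irrel_sq p -> (mdeg m < 2)%N -> p@_m = 0.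
Proof.
move=> [g ->] hm; rewrite raddf_sum big1 // => i _; rewrite raddf_sum big1 // => j _.
apply/eqP; rewrite mcoeff_eq0; apply/negP.
rewrite -mpolyXD mulrC (perm_mem (msuppMX _ _)) => /mapP [m' _ em].
by move: hm; rewrite em !mdegD !mdeg1.
Qed.

End GradedPolynomials.

(* Algebra morphisms as plain functions: the inverse of an lrmorphism carries
   no canonical structure. *)
Definition alg_morph (F : fieldType) (A B : comAlgType F) (f : A -> B) :=
  [/\ {morph f : x y / x + y}, {morph f : x y / x * y}, f 1 = 1
    & forall c x, f (c *: x) = c *: f x].

Section AlgMorph.
Variables (F : fieldType) (A B C : comAlgType F).

Lemma alg_morph0 (f : A -> B) : alg_morph f -> f 0 = 0.
Proof. by case=> _ _ _ fZ; rewrite -(scale0r (0 : A)) fZ scale0r. Qed.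

Lemma alg_morph_sum (f : A -> B) : alg_morph f ->
  forall (I : Type) (s : seq I) (P : pred I) (g : I -> A),
  f (\sum_(i <- s | P i) g i) = \sum_(i <- s | P i) f (g i).
Proof.
by move=> hf; case: (hf) => fD _ _ _; apply: (big_morph f fD (alg_morph0 hf)).
Qed.

Lemma alg_morph_prod (f : A -> B) : alg_morph f ->
  forall (I : Type) (s : seq I) (P : pred I) (g : I -> A),
  f (\prod_(i <- s | P i) g i) = \prod_(i <- s | P i) f (g i).
Proof. by case=> _ fM f1 _; apply: (big_morph f fM f1). Qed.

Lemma alg_morphXn (f : A -> B) : alg_morph f -> forall x k, f (x ^+ k) = f x ^+ k.
Proof.
case=> _ fM f1 _ x; elim=> [|k ih]; first by rewrite !expr0 f1.
by rewrite !exprS fM ih.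
Qed.

Lemma alg_morph_comp (f : A -> B) (g : B -> C) :
  alg_morph f -> alg_morph g -> alg_morph (g \o f).
Proof.
move=> [fD fM f1 fZ] [gD gM g1 gZ]; split=> /=.
- by move=> x y /=; rewrite fD gD.
- by move=> x y /=; rewrite fM gM.
- by rewrite f1 g1.
- by move=> c x /=; rewrite fZ gZ.
Qed.

Lemma lrmorphism_alg_morph (f : {lrmorphism A -> B}) : alg_morph f.
Proof.
split; [exact: rmorphD | exact: rmorphM | exact: rmorph1 |].
by move=> c x; rewrite linearZ.
Qed.

Lemma can_alg_morph (f g : A -> A) : alg_morph f -> cancel f g -> cancel g f ->
  alg_morph g.
Proof.
move=> [fD fM f1 fZ] fK gK; have fI := can_inj fK.
split.
- by move=> x y; apply: fI; rewrite fD !gK.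
- by move=> x y; apply: fI; rewrite fM !gK.
- by apply: fI; rewrite f1 gK.
- by move=> c x; apply: fI; rewrite fZ !gK.
Qed.

End AlgMorph.

Section IdealBelow.
Variables (F : fieldType) (K : zmodType) (r : nat) (q : 'I_r -> K)
  (I : {mpoly F[r]} -> Prop).
Local Notation S := {mpoly F[r]}.

Lemma Ilt0 w : Ilt q I w 0.
Proof.
exists 0%N, (fun _ => 0), (fun _ => 0), (fun _ => w); split; first by case.
by rewrite big_ord0.
Qed.

Lemma IltD w p1 p2 : Ilt q I w p1 -> Ilt q I w p2 -> Ilt q I w (p1 + p2).
Proof.
move=> [n1 [f1 [g1 [v1 [h1 ->]]]]] [n2 [f2 [g2 [v2 [h2 ->]]]]].
pose sel (T : Type) (a : 'I_n1 -> T) (b : 'I_n2 -> T) (i : 'I_(n1 + n2)) :=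
  match split i with inl j => a j | inr j => b j end.
exists (n1 + n2)%N, (sel _ f1 f2), (sel _ g1 g2), (sel _ v1 v2); split.
  by move=> i; rewrite /sel; case: (split i).
rewrite big_split_ord /= /sel; congr (_ + _); apply: eq_bigr => i _.
  by rewrite -[lshift _ _]/(unsplit (inl i)) unsplitK.
by rewrite -[rshift _ _]/(unsplit (inr i)) unsplitK.
Qed.

Lemma IltMl w h p : Ilt q I w p -> Ilt q I w (h * p).
Proof.
move=> [n [f [g [v [hg ->]]]]]; exists n, (fun i => h * f i), g, v; split => //.
by rewrite mulr_sumr; apply: eq_bigr => i _; rewrite mulrA.
Qed.

Lemma IltMr w h p : Ilt q I w p -> Ilt q I w (p * h).
Proof. by rewrite mulrC; apply: IltMl. Qed.

Lemma IltZ w c p : Ilt q I w p -> Ilt q I w (c *: p).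
Proof. by rewrite -mul_mpolyC; apply: IltMl. Qed.

Lemma IltB w p1 p2 : Ilt q I w p1 -> Ilt q I w p2 -> Ilt q I w (p1 - p2).
Proof. by move=> h1 h2; apply: IltD => //; rewrite -scaleN1r; apply: IltZ. Qed.

Lemma Ilt_sum w (T : Type) (s : seq T) (P : pred T) (f : T -> S) :
  (forall i, P i -> Ilt q I w (f i)) -> Ilt q I w (\sum_(i <- s | P i) f i).
Proof. by move=> h; apply: big_ind => //; [apply: Ilt0 | apply: IltD]. Qed.

Lemma Icomp_Ilt w v g : ltS F q v w -> Icomp q I v g -> Ilt q I w g.
Proof.
move=> hv hg; exists 1%N, (fun _ => 1), (fun _ => g), (fun _ => v); split => //.
by rewrite big_ord1 mul1r.
Qed.

Lemma Ilt_map (Phi : S -> S) (psi : K -> K) : alg_morph Phi ->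
  (forall v w, ltS F q v w -> ltS F q (psi v) (psi w)) ->
  (forall v p, homogS q v p -> homogS q (psi v) (Phi p)) ->
  (forall p, I p -> I (Phi p)) ->
  forall w p, Ilt q I w p -> Ilt q I (psi w) (Phi p).
Proof.
move=> hPhi hlt hhom hI w p [n [f [g [v [hg ->]]]]].
exists n, (fun i => Phi (f i)), (fun i => Phi (g i)), (fun i => psi (v i)); split.
  by move=> i; have [lti [Ig hg']] := hg i; split; [apply: hlt | split; auto].
by rewrite (alg_morph_sum hPhi); apply: eq_bigr => i _; case: hPhi => _ ->.
Qed.

End IdealBelow.

Section Presentation.
Variables (F : fieldType) (K : zmodType) (R : comAlgType F) (G : K -> R -> Prop).
Hypothesis grG : is_grading G.
Hypothesis R_nontriv : (1 : R) != 0.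
Hypothesis R_integral : forall a b : R, a * b = 0 -> a = 0 \/ b = 0.
Hypothesis R0_scalar : forall x : R, G 0 x -> exists c : F, x = c%:A.
Variables (r : nat) (q : 'I_r -> K) (pi : {lrmorphism {mpoly F[r]} -> R}).
Hypothesis pi_graded : forall w p, homogS q w p -> G w (pi p).
Hypothesis pi_surj : forall y : R, exists p, pi p = y.
Hypothesis pi_minimal : forall p, pi p = 0 -> in_irrel_sq p.
Local Notation S := {mpoly F[r]}.
Local Notation I := (fun p : S => pi p = 0).

Lemma gradingB w x y : G w x -> G w y -> G w (x - y).
Proof.
case: grG => _ [GD [GZ _]] hx hy.
by apply: GD => //; rewrite -scaleN1r; apply: GZ.
Qed.

Lemma pi_homog_part u (p : S) : G u (pi p) -> pi (homog_part q u p) = pi p.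
Proof.
(* The pairs (v, pi (homog_part v p)) for v != u, together with
   (u, pi (homog_part u p) - pi p), decompose 0 into homogeneous parts. *)
move=> Gp; pose D := undup (u :: map (mdegK q) (msupp p)).
have uD : u \in D by rewrite mem_undup mem_head.
pose s := [seq (v, pi (homog_part q v p) - (if v == u then pi p else 0)) | v <- D].
have us : uniq (map fst s) by rewrite -map_comp map_id undup_uniq.
have Gs x : x \in s -> G x.1 x.2.
  move=> /mapP [v _ ->] /=; case: eqP => [->|_].
    by apply: gradingB Gp; apply: pi_graded; apply: homogS_part.
  by rewrite subr0; apply: pi_graded; apply: homogS_part.
have s0 : \sum_(x <- s) x.2 = 0.
  have sD : {subset map (mdegK q) (msupp p) <= D}.
    by move=> v hv; rewrite mem_undup in_cons hv orbT.
  rewrite big_map /= sumrB -raddf_sum /= sum_homog_part ?undup_uniq //.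
  rewrite -big_mkcond /= -big_filter (@eq_in_filter _ _ (pred1 u)) //.
  by rewrite filter_pred1_uniq ?undup_uniq // big_seq1 subrr.
have uin : (u, pi (homog_part q u p) - pi p) \in s.
  by apply/mapP; exists u; rewrite ?eqxx.
case: grG => _ [_ [_ [_ [_ Gdirect]]]].
by apply/eqP; rewrite -subr_eq0; apply/eqP; exact: (Gdirect s us Gs s0 _ uin).
Qed.

Lemma homog_preimage u y : G u y -> exists p : S, homogS q u p /\ pi p = y.
Proof.
have [p <-] := pi_surj y => Gp.
by exists (homog_part q u p); split; [apply: homogS_part | apply: pi_homog_part].
Qed.

Lemma pi_var_neq0 i : pi 'X_i != 0.
Proof.
apply/eqP => /pi_minimal /(irrel_sq_mcoeff (m := U_(i)%MM)).
by rewrite mdeg1 mcoeffXU eqxx => /(_ isT) /eqP; rewrite oner_eq0.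
Qed.

Lemma pi_monomial_neq0 m : pi 'X_[m] != 0.
Proof.
have mulR_neq0 (a b : R) : a != 0 -> b != 0 -> a * b != 0.
  by move=> /eqP ha /eqP hb; apply/eqP => /R_integral [].
rewrite mpolyXE_id rmorph_prod /=.
apply: (big_ind (fun x : R => x != 0)) => // i _; rewrite rmorphXn /=.
by elim: (m i) => [|k ih]; rewrite ?expr0 // exprS mulR_neq0 ?pi_var_neq0.
Qed.

Lemma weightS_weight u : weightS F q u -> weight G u.
Proof.
move=> [p [hp]]; rewrite -msupp_eq0; case e: (msupp p) => [|m s] // _.
have mp : m \in msupp p by rewrite e mem_head.
exists (pi 'X_[m]); split; last exact: pi_monomial_neq0.
by rewrite -(hp m mp); apply: pi_graded; apply: homogSX.
Qed.

Lemma weight_weightS u : weight G u -> weightS F q u.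
Proof.
move=> [x [Gx nz]]; have [p [hp px]] := homog_preimage Gx.
by exists p; split => //; apply: contraNneq nz => p0; rewrite -px p0 raddf0.
Qed.

Lemma graded_lift (phi : R -> R) (psi : K -> K) : alg_morph phi ->
  {morph psi : x y / x + y} -> (forall w x, G w x -> G (psi w) (phi x)) ->
  exists Phi : S -> S, [/\ alg_morph Phi,
    forall v p, homogS q v p -> homogS q (psi v) (Phi p)
    & forall p, pi (Phi p) = phi (pi p)].
Proof.
move=> hphi psiD hG.
have psi0 : psi 0 = 0 by apply: (@addrI _ (psi 0)); rewrite -psiD !addr0.
have psiMn x k : psi (x *+ k) = psi x *+ k.
  by elim: k => [|k ih]; rewrite ?mulr0n ?psi0 // !mulrS psiD ih.
have lift_var i : exists f : S, homogS q (psi (q i)) f /\ pi f = phi (pi 'X_i).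
  by apply: homog_preimage; apply: hG; apply: pi_graded; apply: homogS_var.
pose f i := proj1_sig (constructive_indefinite_description _ (lift_var i)).
have fP i : homogS q (psi (q i)) (f i) /\ pi (f i) = phi (pi 'X_i).
  exact: proj2_sig (constructive_indefinite_description _ (lift_var i)).
pose t := [tuple f i | i < r].
exists (fun p => p \mPo t); split.
- split; [exact: comp_mpolyD | by move=> x y; rewrite rmorphM
         | exact: comp_mpoly1 | by move=> c x; rewrite comp_mpolyZ].
- move=> v p hp; rewrite comp_mpolyEX big_seq.
  apply: homogS_sum => m /hp <-; apply: homogSZ.
  rewrite comp_mpolyX /mdegK (big_morph psi psiD psi0).
  apply: (big_ind2 (fun w (p : S) => homogS q w p)); first exact: homogS1.
    by move=> w1 p1 w2 p2; apply: homogSM.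
  by move=> i _; rewrite tnth_mktuple psiMn; apply: homogSXn; apply: (fP i).1.
- move=> p; have hpi := lrmorphism_alg_morph pi.
  case: (hpi) (hphi) => _ _ _ piZ [_ _ _ phiZ].
  rewrite comp_mpolyEX [in RHS](mpolyE p) !(alg_morph_sum hpi) (alg_morph_sum hphi).
  apply: eq_bigr => m _; rewrite !piZ phiZ; congr (_ *: _).
  rewrite comp_mpolyX mpolyXE_id !(alg_morph_prod hpi) (alg_morph_prod hphi).
  apply: eq_bigr => i _.
  by rewrite !(alg_morphXn hpi) (alg_morphXn hphi) tnth_mktuple (fP i).2.
Qed.

Lemma ltS_var_Icomp w (p : S) m i : Icomp q I w p -> m \in msupp p ->
  m i != 0%N -> ltS F q (q i) w.
Proof.
move=> [Ip hp] hm mi; pose m' := (m - U_(i))%MM.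
have em : m = (m' + U_(i))%MM by rewrite submK // lep1mP.
have dm' : mdegK q m' = w - q i by rewrite -(hp m hm) em mdegKD mdegK1 addrK.
split; first by rewrite /leS -dm'; apply: weightS_X.
move=> eqi; have d0 : mdegK q m' = 0 by rewrite dm' eqi subrr.
(* m' = 0 would make T_i a linear term of p; otherwise pi T^m' is a nonzero
   scalar c, and T^m' - c in I has the nonzero constant term -c. *)
have nz' : m' != 0%MM.
  apply/eqP => m0; move: hm; rewrite mcoeff_msupp em m0 add0m.
  by rewrite (irrel_sq_mcoeff (pi_minimal Ip)) ?mdeg1 ?eqxx.
have [c ec] : exists c : F, pi 'X_[m'] = c%:A.
  by apply: R0_scalar; rewrite -d0; apply: pi_graded; apply: homogSX.
have It : pi ('X_[m'] - c%:MP : S) = 0.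
  by rewrite rmorphB /= ec -[c%:MP]mulr1 mul_mpolyC linearZ /= rmorph1 subrr.
have := irrel_sq_mcoeff (m := 0%MM) (pi_minimal It); rewrite mdeg0 => /(_ isT).
rewrite mcoeffB mcoeffX mcoeffC (negPf nz') eqxx mulr1 sub0r => /eqP.
rewrite oppr_eq0 => /eqP c0.
by move: (pi_monomial_neq0 m'); rewrite ec c0 scale0r eqxx.
Qed.

Lemma Ilt_endo_sub (Theta : S -> S) : alg_morph Theta ->
  (forall i, homogS q (q i) (Theta 'X_i)) ->
  (forall i, pi (Theta 'X_i) = pi 'X_i) ->
  forall w p, Icomp q I w p -> Ilt q I w (Theta p - p).
Proof.
move=> hTh homTh piTh w p hp.
pose P a := Ilt q I w (Theta a - a).
have P1 : P 1 by rewrite /P; case: hTh => _ _ -> _; rewrite subrr; apply: Ilt0.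
have PM a b : P a -> P b -> P (a * b).
  rewrite /P; case: (hTh) => _ -> _ _ ha hb.
  have -> : Theta a * Theta b - a * b = Theta a * (Theta b - b) + (Theta a - a) * b.
    by rewrite mulrBr mulrBl addrA subrK.
  by apply: IltD; [apply: IltMl | apply: IltMr].
have Pvar i : ltS F q (q i) w -> P 'X_i.
  move=> lti; apply: (Icomp_Ilt lti).
  by split; [rewrite /= rmorphB /= piTh subrr | apply: homogSB; last apply: homogS_var].
rewrite [X in Theta X]mpolyE [X in _ - X]mpolyE (alg_morph_sum hTh) -sumrB big_seq.
apply: Ilt_sum => m hm; case: (hTh) => _ _ _ ->; rewrite -scalerBr; apply: IltZ.
rewrite mpolyXE_id; apply: (big_ind P) => // i _.
case: (eqVneq (m i) 0%N) => [->|mi]; first by rewrite expr0.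
elim: (m i) => [|k ih]; rewrite ?expr0 // exprS.
by apply: PM => //; apply: Pvar; apply: ltS_var_Icomp hp hm mi.
Qed.

Lemma ltS_map (phi : R -> R) (psi : K -> K) : alg_morph phi -> injective phi ->
  {morph psi : x y / x + y} -> injective psi ->
  (forall w x, G w x -> G (psi w) (phi x)) ->
  forall v w, ltS F q v w -> ltS F q (psi v) (psi w).
Proof.
move=> hphi phiI psiD psiI hG v w [hle hne]; split; last by move=> /psiI.
rewrite /leS; have -> : psi w - psi v = psi (w - v).
  by apply/eqP; rewrite subr_eq -psiD subrK.
apply: weight_weightS; have [x [Gx nx]] := weightS_weight hle.
exists (phi x); split; first exact: hG.
by apply: contra nx => /eqP e; apply/eqP/phiI; rewrite e alg_morph0.
Qed.

Lemma OmegaI_map (phi phi' : R -> R) (psi psi' : K -> K) :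
  alg_morph phi -> alg_morph phi' -> cancel phi phi' -> cancel phi' phi ->
  {morph psi : x y / x + y} -> {morph psi' : x y / x + y} ->
  cancel psi psi' -> cancel psi' psi ->
  (forall w x, G w x -> G (psi w) (phi x)) ->
  (forall w x, G w x -> G (psi' w) (phi' x)) ->
  forall w, OmegaI q I w -> OmegaI q I (psi w).
Proof.
move=> hphi hphi' phiK phiK' psiD psiD' psiK psiK' hG hG' w [p [[Ip hp] notIlt]].
have [Phi [hPhi homPhi piPhi]] := graded_lift hphi psiD hG.
have [Phi' [hPhi' homPhi' piPhi']] := graded_lift hphi' psiD' hG'.
exists (Phi p); split; first by split; [rewrite piPhi Ip alg_morph0 | apply: homPhi].
move=> Ilt_Phi; apply: notIlt.
have lt_back : forall v u, ltS F q v u -> ltS F q (psi' v) (psi' u).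
  exact: ltS_map hphi' (can_inj phiK') psiD' (can_inj psiK') hG'.
have Ilt_PhiPhi : Ilt q I w (Phi' (Phi p)).
  rewrite -[w]psiK; apply: (Ilt_map hPhi' lt_back homPhi') Ilt_Phi.
  by move=> p0 /= e; rewrite piPhi' e alg_morph0.
rewrite -[p](subKr (Phi' (Phi p))); apply: IltB => //.
apply: (Ilt_endo_sub (alg_morph_comp hPhi hPhi')) (conj Ip hp) => i /=.
  by rewrite -[q i]psiK; apply: homPhi'; apply: homPhi; apply: homogS_var.
by rewrite piPhi' piPhi phiK.
Qed.

End Presentation.

Theorem proposition2p6
  (F : closedFieldType) (charF0 : [pchar F] =i pred0)
  (K : zmodType) (fgK : fingen_group K)
  (R : comAlgType F)
  (R_nontriv : (1 : R) != 0)
  (R_integral : forall a b : R, a * b = 0 -> a = 0 \/ b = 0)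
  (G : K -> R -> Prop) (grG : is_grading G)
  (effG : effective_grading G) (ptdG : pointed_grading G)
  (r : nat) (q : 'I_r -> K)
  (pi : {lrmorphism {mpoly F[r]} -> R})
  (pi_graded : forall w p, homogS q w p -> G w (pi p))
  (pi_surj : forall y : R, exists p, pi p = y)
  (pi_minimal : forall p, pi p = 0 -> in_irrel_sq p)
  (phi : {lrmorphism R -> R}) (phi_bij : bijective phi)
  (psi : {additive K -> K}) (psi_bij : bijective psi)
  (phi_psi_graded : forall w x, G w x -> G (psi w) (phi x))
  (phi_psi_onto : forall w y, G (psi w) y -> exists x, G w x /\ phi x = y) :
  let I := fun p => pi p = 0 in
  (forall w, OmegaI q I w -> OmegaI q I (psi w)) /\
  (forall w, OmegaI q I w -> exists w', OmegaI q I w' /\ psi w' = w).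
Proof.
move=> I; case: phi_bij => phi' phiK phiK'; case: psi_bij => psi' psiK psiK'.
have hphi := lrmorphism_alg_morph phi.
have hphi' := can_alg_morph hphi phiK phiK'.
have psiD : {morph psi : x y / x + y} by move=> x y; rewrite raddfD.
have psiD' : {morph psi' : x y / x + y}.
  by move=> x y; apply: (can_inj psiK); rewrite psiD !psiK'.
have hG' w y : G w y -> G (psi' w) (phi' y).
  by rewrite -{1}[w]psiK' => /phi_psi_onto [x [Gx <-]]; rewrite phiK.
have Omega_map :=
  OmegaI_map grG R_nontriv R_integral ptdG.1 pi_graded pi_surj pi_minimal.
split.
  exact: Omega_map hphi hphi' phiK phiK' psiD psiD' psiK psiK' phi_psi_graded hG'.
move=> w hw; exists (psi' w); split; last exact: psiK'.
exact: Omega_map hphi' hphi phiK' phiK psiD' psiD psiK' psiK hG' phi_psi_graded w hw.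
Qed.
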